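(* Let $\sigma$ be a nonnegative finite measure on $\mathbb{R}^2$ which is upper $\alpha$-Ahlfors regular for some $\alpha>1$ and constants $M,r_*>0$, with $\sigma(\mathbb{R}^2)=\Phi\le Mr_*^\alpha$. Then $$\|\sigma\|^2_{H^{-1/2}(\mathbb{R}^2)}\lesssim_\alpha M^{1/\alpha}\Phi^{2-1/\alpha}.$$
   Context: For $\alpha\in[0,2]$, a nonnegative finite measure $\sigma$ on $\mathbb{R}^2$ is upper $\alpha$-Ahlfors regular with constants $M,r_*>0$ if $\sigma(B(x,r))\le Mr^\alpha$ for all $x\in\operatorname{supp}\sigma$ and all $r\in(0,r_*]$. $\|\sigma\|^2_{H^{-1/2}(\mathbb{R}^2)}=\int\int|x-y|^{-1}d\sigma(x)d\sigma(y)$. $A\lesssim_\alpha B$ means $A\le CB$ with $C$ depending only on $\alpha$. *)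

From mathcomp Require Import all_boot all_algebra all_classical all_reals all_analysis.
Import GRing.Theory Num.Theory.
Local Open Scope classical_set_scope.
Local Open Scope ring_scope.

(* The plane R^2 is modelled as R * R with the product of the Borel
   sigma-algebras (= the Borel sigma-algebra of R^2). *)

Definition edist {R : realType} (x y : R * R) : R :=
  Num.sqrt ((x.1 - y.1) ^+ 2 + (x.2 - y.2) ^+ 2).

Definition eball {R : realType} (x : R * R) (r : R) : set (R * R) :=
  [set y | edist x y < r].

Definition msupp {R : realType} (sigma : set (R * R) -> \bar R) : set (R * R) :=
  [set x | forall r : R, 0 < r -> (0 < sigma (eball x r))%E].

Definition upper_ahlfors_regular {R : realType}
  (sigma : set (R * R) -> \bar R) (alpha M rstar : R) : Prop :=
  forall x, msupp sigma x ->
  forall r : R, 0 < r -> r <= rstar ->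
    (sigma (eball x r) <= (M * r `^ alpha)%:E)%E.

Definition riesz1 {R : realType} (x y : R * R) : \bar R :=
  if x == y then +oo%E else ((edist x y)^-1)%:E.

(* ||sigma||^2_{H^{-1/2}} = \int\int |x-y|^{-1} dsigma(x) dsigma(y) *)
Definition hmhalf_energy {R : realType}
  (sigma : {measure set (R * R)%type -> \bar R}) : \bar R :=
  (\int[sigma]_x \int[sigma]_y riesz1 x y)%E.

(* Split the kernel dyadically at a scale rho:
     |x - y|^-1 <= rho^-1 + \sum_k 2^(k+1) / rho * 1_{B(x, rho 2^-k)}(y).
   For x in the support of sigma and rho <= rstar, Ahlfors regularity bounds
   the measure of the k-th ball by M (rho 2^-k)^alpha; since alpha > 1 the
   resulting series is geometric with ratio 2^(1 - alpha), whence
     \int |x - y|^-1 dsigma(y) <= Phi / rho + C_alpha M rho^(alpha - 1).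
   Balls with rational centres and radii show that sigma-almost every point
   lies in the support, so integrating in x gives
   ||sigma||^2 <= Phi^2 / rho + C_alpha M Phi rho^(alpha - 1); the choice
   rho = (Phi / M)^(1/alpha), admissible since Phi <= M rstar^alpha,
   balances the two terms. *)

From Pilot Require Import Defs.
From mathcomp Require Import all_boot all_algebra all_classical all_reals all_analysis.
From mathcomp Require Import ring lra order measurable_realfun.
Import Order.TTheory GRing.Theory Num.Theory.
Local Open Scope classical_set_scope.
Local Open Scope ring_scope.

(* MathComp-Analysis also has an [edist] (the extended distance of urysohn.v). *)
Local Notation edist := Pilot.Defs.edist.

Section powR_extra.
Context {R : realType}.

Lemma powR_lt1 (a s : R) : 1 < a -> s < 0 -> a `^ s < 1.
Proof.
move=> a1 s0; rewrite /powR ifF ?gt_eqF ?(lt_trans ltr01) //.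
by rewrite expR_lt1 pmulr_llt0 // ln_gt0.
Qed.

Lemma powRV (a s : R) : 0 <= a -> a^-1 `^ s = (a `^ s)^-1.
Proof. by move=> a0; rewrite -powR_inv1 // powRAC powR_inv1 // powR_ge0. Qed.

Lemma ler_powRV (a b s : R) : 0 < s -> 0 <= a -> 0 <= b -> a <= b `^ s ->
  a `^ s^-1 <= b.
Proof.
move=> s0 a0 b0 ab.
have -> : b = (b `^ s) `^ s^-1 by rewrite -powRrM divff ?gt_eqF // powRr1.
by apply: ge0_ler_powR; rewrite ?nnegrE ?invr_ge0 ?powR_ge0 ?(ltW s0).
Qed.

Lemma powR_div (a b s : R) : 0 <= a -> 0 <= b -> (a / b) `^ s = a `^ s / b `^ s.
Proof. by move=> a0 b0; rewrite powRM ?invr_ge0 // powRV. Qed.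

End powR_extra.

Section integral_bounds.
Context {d} {T : measurableType d} {R : realType}.
Variable mu : {measure set T -> \bar R}.
Local Open Scope ereal_scope.

(* No measurability is required: the integral of a nonnegative function is
   the supremum of the integrals of the simple functions below it. *)
Lemma ge0_le_integralT (f g : T -> \bar R) : (forall x, 0 <= f x) ->
  (forall x, f x <= g x) -> \int[mu]_x f x <= \int[mu]_x g x.
Proof.
move=> f0 fg; have g0 x : 0 <= g x by exact: le_trans (f0 x) (fg x).
rewrite !ge0_integralTE //; apply: ereal_sup_le => _ [h hf <-].
by exists h => //= x; exact: le_trans (hf x) (fg x).
Qed.

Lemma ge0_integral_ae_le_cst (g : T -> \bar R) (K : R) : (0 <= K)%R ->
  (forall x, 0 <= g x) -> {ae mu, forall x, g x <= K%:E} ->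
  \int[mu]_x g x <= K%:E * mu setT.
Proof.
move=> K0 g0 [N [mN N0 gN]].
pose h x := if x \in N then +oo else K%:E.
have mh : measurable_fun setT h.
  apply: measurable_fun_ifT => //; apply: (measurable_fun_bool true).
  by rewrite setTI preimage_mem_true.
apply: (@le_trans _ _ (\int[mu]_x h x)).
  apply: ge0_le_integralT => // x; rewrite /h.
  case: ifPn => [_|xN]; first exact: leey.
  apply: contrapT => gx; move/negP: xN; apply; rewrite inE; exact: gN.
rewrite (ge0_negligible_integral _ _ _ _ N0) //; last first.
  by move=> x _; rewrite /h; case: ifP.
have -> : \int[mu]_(x in setT `\` N) h x = \int[mu]_(x in setT `\` N) (cst K%:E) x.
  by apply: eq_integral => x; rewrite inE => -[_ Nx]; rewrite /h memNset.
rewrite integral_cst; last exact: measurableD.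
apply: lee_wpmul2l; first by rewrite lee_fin.
by apply: le_measure; rewrite ?inE //; exact: measurableD.
Qed.

End integral_bounds.

Section euclidean_distance.
Context {R : realType}.
Implicit Types x y z : R * R.

Lemma edist_ge0 x y : 0 <= edist x y.
Proof. exact: sqrtr_ge0. Qed.

Lemma edistC x y : edist x y = edist y x.
Proof. by rewrite /edist; congr Num.sqrt; ring. Qed.

Lemma edistxx x : edist x x = 0.
Proof. by rewrite /edist !subrr expr0n /= addr0 sqrtr0. Qed.

Lemma edist_gt0 x y : x != y -> 0 < edist x y.
Proof.
case: x y => [a b] [c e]; rewrite /edist sqrtr_gt0 /=.
have [-> xy|ac _] := eqVneq a c.
  have be : b != e by move: xy; apply: contraNneq => ->.
  by rewrite subrr expr0n add0r exprn_even_gt0 //= subr_eq0.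
by rewrite ltr_pwDl ?sqr_ge0 // exprn_even_gt0 //= subr_eq0.
Qed.

Lemma edist_le_l1 x y : edist x y <= `|x.1 - y.1| + `|x.2 - y.2|.
Proof.
have uv0 := mulr_ge0 (normr_ge0 (x.1 - y.1)) (normr_ge0 (x.2 - y.2)).
rewrite /edist -(ger0_norm (addr_ge0 (normr_ge0 (x.1 - y.1)) (normr_ge0 _))).
rewrite -sqrtr_sqr ler_wsqrtr // (sqrrD `|_|) !real_normK ?num_real //; lra.
Qed.

Lemma edist_triangle x y z : edist x z <= edist x y + edist y z.
Proof.
set u1 := x.1 - y.1; set u2 := x.2 - y.2; set v1 := y.1 - z.1; set v2 := y.2 - z.2.
have [a0 b0] : 0 <= u1 ^+ 2 + u2 ^+ 2 /\ 0 <= v1 ^+ 2 + v2 ^+ 2.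
  by split; rewrite addr_ge0 ?sqr_ge0.
(* Cauchy-Schwarz, from Lagrange's identity *)
have cs : u1 * v1 + u2 * v2 <= Num.sqrt ((u1 ^+ 2 + u2 ^+ 2) * (v1 ^+ 2 + v2 ^+ 2)).
  apply: le_trans (ler_norm _) _; rewrite -sqrtr_sqr ler_wsqrtr ?sqr_ge0 //.
  rewrite -subr_ge0.
  have -> : (u1 ^+ 2 + u2 ^+ 2) * (v1 ^+ 2 + v2 ^+ 2) - (u1 * v1 + u2 * v2) ^+ 2
    = (u1 * v2 - u2 * v1) ^+ 2 by ring.
  exact: sqr_ge0.
rewrite /edist -/u1 -/u2 -/v1 -/v2.
have -> : x.1 - z.1 = u1 + v1 by rewrite /u1 /v1 addrA subrK.
have -> : x.2 - z.2 = u2 + v2 by rewrite /u2 /v2 addrA subrK.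
clearbody u1 u2 v1 v2.
rewrite -[leRHS]ger0_norm ?addr_ge0 ?sqrtr_ge0 // -sqrtr_sqr ler_wsqrtr //.
rewrite (sqrrD (Num.sqrt _)) !sqr_sqrtr // -sqrtrM // !sqrrD; lra.
Qed.

Lemma measurable_edist x : measurable_fun setT (edist x).
Proof.
apply: measurableT_comp.
  by apply: continuous_measurable_fun; exact: sqrt_continuous.
by apply: measurable_funD; apply: measurable_funX; apply: measurable_funB.
Qed.

Lemma measurable_eball x r : measurable (eball x r).
Proof.
have := measurable_edist x measurableT _ (measurable_itv `]-oo, r[).
by rewrite setTI; congr measurable; apply/seteqP; split => y /=; rewrite in_itv.
Qed.

End euclidean_distance.

Lemma dyadic_bracket {R : archiFieldType} (d rho : R) : 0 < d -> d < rho ->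
  exists k, rho / 2 ^+ k.+1 <= d < rho / 2 ^+ k.
Proof.
move=> d0 drho; have rho0 := lt_trans d0 drho.
have exP : exists n, rho / 2 ^+ n <= d.
  exists (Num.truncn (rho / d)).+1.
  rewrite ler_pdivrMr ?exprn_gt0 // -ler_pdivrMl // mulrC.
  apply: (le_trans (ltW (truncnS_gt _))).
  by rewrite -natrX ler_nat ltnW // ltn_expl.
(* [k.+1] is the least [n] with [rho / 2 ^+ n <= d]. *)
case: (ex_minnP exP) => -[|m] hm hmin.
  by move: hm; rewrite expr0 divr1 leNgt drho.
exists m; rewrite hm /= ltNge; apply/negP => /hmin.
by rewrite ltnn.
Qed.

Section dyadic_decomposition.
Context {R : realType}.
Variables (x : R * R) (rho : R).
Hypothesis rho_gt0 : 0 < rho.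
Local Open Scope ereal_scope.

Definition dyadic_term (k : nat) (y : R * R) : \bar R :=
  ((2 ^+ k.+1 / rho) * \1_(eball x (rho / 2 ^+ k)) y)%:E.

Lemma dyadic_term_ge0 k y : 0 <= dyadic_term k y.
Proof. by rewrite lee_fin mulr_ge0 ?divr_ge0 ?exprn_ge0 ?(ltW rho_gt0). Qed.

Lemma dyadic_term_center k : (rho^-1)%:E <= dyadic_term k x.
Proof.
rewrite /dyadic_term indicE mem_set; last first.
  by rewrite /eball /= edistxx divr_gt0 // exprn_gt0.
by rewrite mulr1 lee_fin -[leLHS]mul1r ler_pM2r ?invr_gt0 // exprn_ege1 // ler1n.
Qed.

Lemma dyadic_sum_center : \sum_(k <oo) dyadic_term k x = +oo.
Proof.
apply: eq_infty => r; have [n rn] : exists n : nat, (r * rho < n%:R)%R.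
  by exists (Num.truncn (r * rho)).+1; exact: truncnS_gt.
apply: le_trans (nneseries_lim_ge n (fun k _ _ => dyadic_term_ge0 k x)).
apply: (@le_trans _ _ (\sum_(0 <= i < n) (rho^-1)%:E)); last first.
  by apply: lee_sum => k _; exact: dyadic_term_center.
rewrite sumEFin lee_fin sumr_const_nat subn0 -mulr_natl ler_pdivlMr //.
exact: ltW.
Qed.

Lemma dyadic_term_le_sum k y : dyadic_term k y <= \sum_(i <oo) dyadic_term i y.
Proof.
rewrite (@nneseriesD1 _ _ k) // ?leeDl //; last by move=> *; exact: dyadic_term_ge0.
by apply: nneseries_ge0 => *; exact: dyadic_term_ge0.
Qed.

Lemma riesz1_le_dyadic y :
  riesz1 x y <= (rho^-1)%:E + \sum_(k <oo) dyadic_term k y.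
Proof.
rewrite /riesz1; have [<-|xy] := eqVneq x y.
  by rewrite dyadic_sum_center addey.
have d0 := edist_gt0 _ _ xy; have [rd|dr] := leP rho (edist x y).
  apply: le_trans (leeDl _ _); first by rewrite lee_fin lef_pV2 ?posrE.
  by apply: nneseries_ge0 => *; exact: dyadic_term_ge0.
have [k /andP[dk kd]] := dyadic_bracket _ _ d0 dr.
apply: le_trans (leeDr _ _) ; last by rewrite lee_fin invr_ge0 ltW.
apply: le_trans (dyadic_term_le_sum k y).
rewrite /dyadic_term indicE mem_set // mulr1 lee_fin -invf_div lef_pV2 ?posrE //.
by rewrite divr_gt0 // exprn_gt0.
Qed.

End dyadic_decomposition.

Section dyadic_series.
Context {R : realType}.

Lemma dyadic_bound_geometric (alpha M rho : R) (k : nat) : 0 < rho ->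
  (2 ^+ k.+1 / rho) * (M * (rho / 2 ^+ k) `^ alpha) =
  (2 * M * rho `^ alpha / rho) * (2 `^ (1 - alpha)) ^+ k.
Proof.
move=> r0.
have ball_pow : (rho / 2 ^+ k) `^ alpha = rho `^ alpha * 2 `^ (- (k%:R * alpha)).
  rewrite powRM ?invr_ge0 ?exprn_ge0 ?ltW //.
  by rewrite -powR_invn // -powRrM mulNr.
have ratio_pow : (2 `^ (1 - alpha)) ^+ k = 2 `^ (k%:R - k%:R * alpha) :> R.
  rewrite -powR_mulrn ?powR_ge0 // -powRrM; congr (_ `^ _); ring.
have ratio_powD :
    2 `^ (k%:R - k%:R * alpha) = 2 `^ k%:R * 2 `^ (- (k%:R * alpha)) :> R.
  by rewrite powRD // pnatr_eq0 implybT.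
rewrite ball_pow ratio_pow ratio_powD powR_mulrn // exprS; ring.
Qed.

Lemma dyadic_series_le (alpha M rho : R) : 1 < alpha -> 0 <= M -> 0 < rho ->
  (\sum_(k <oo) ((2 ^+ k.+1 / rho) * (M * (rho / 2 ^+ k) `^ alpha))%:E <=
   (2 * M * rho `^ alpha / rho / (1 - 2 `^ (1 - alpha)))%:E)%E.
Proof.
move=> a1 M0 r0; have q0 : 0 < 2 `^ (1 - alpha) :> R by rewrite powR_gt0.
have q1 : 2 `^ (1 - alpha) < 1 :> R by rewrite powR_lt1 ?ltr1n // subr_lt0.
have c0 : 0 <= 2 * M * rho `^ alpha / rho.
  by rewrite divr_ge0 ?(ltW r0) // mulr_ge0 ?powR_ge0 // mulr_ge0.
apply: lime_le.
  apply: is_cvg_nneseries => n _ _; rewrite lee_fin dyadic_bound_geometric //.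
  by rewrite mulr_ge0 // exprn_ge0 // ltW.
apply: nearW => n; rewrite sumEFin lee_fin.
under eq_bigr do rewrite dyadic_bound_geometric //.
have := geometric_le_lim n c0 q0 (_ : `|2 `^ (1 - alpha)| < 1).
by rewrite /series /geometric /=; apply; rewrite ger0_norm // ltW.
Qed.

End dyadic_series.

Section support.
Context {R : realType}.

Lemma exists_rat_near (u e : R) : 0 < e -> exists a : rat, `|u - ratr a| < e.
Proof.
move=> e0; have ue : u - e < u + e by lra.
have [a /[!in_itv] /= ua] := rat_in_itvoo ue.
by exists a; rewrite ltr_distlC.
Qed.

Definition rat_ball (q : rat * rat * rat) : set (R * R) :=
  eball (ratr q.1.1, ratr q.1.2) (ratr q.2).

Lemma exists_rat_ball (x : R * R) (r : R) : 0 < r ->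
  exists q, rat_ball q x /\ rat_ball q `<=` eball x r.
Proof.
move=> r0; have r8 : 0 < r / 8 by rewrite divr_gt0.
have [a xa] := exists_rat_near x.1 (r / 8) r8.
have [b xb] := exists_rat_near x.2 (r / 8) r8.
have r42 : r / 4 < r / 2 by lra.
have [c /[!in_itv] /= /andP[c1 c2]] := rat_in_itvoo r42.
have xp : edist x (ratr a, ratr b) < r / 4.
  apply: le_lt_trans (edist_le_l1 _ _) _; rewrite /=; lra.
exists (a, b, c); split; first by rewrite /rat_ball /eball /= edistC; lra.
move=> y; rewrite /rat_ball /eball /= => py.
apply: le_lt_trans (edist_triangle x (ratr a, ratr b) y) _; lra.
Qed.

Lemma msupp_ae (sigma : {measure set (R * R) -> \bar R}) :
  {ae sigma, forall x, msupp sigma x}.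
Proof.
pose A n := if @unpickle (rat * rat * rat)%type n is Some q then
  (if sigma (rat_ball q) == 0%E then rat_ball q else set0) else set0.
apply: (@negligibleS _ _ _ _ (\bigcup_n A n)).
  move=> x /= /existsNP[r /not_implyP[r0 /negP]].
  rewrite -leNgt measure_le0 => /eqP null.
  have [q [qx qsub]] := exists_rat_ball x r r0.
  exists (pickle q) => [//|]; rewrite /A pickleK.
  suff -> : sigma (rat_ball q) == 0%E by [].
  rewrite -measure_le0 -null; apply: le_measure qsub; rewrite inE;
    exact: measurable_eball.
apply: negligible_bigcup => n; rewrite /A; case: unpickle => [q|]; last first.
  exact: negligible_set0.
case: ifP => [/eqP q0|_]; last exact: negligible_set0.
by exists (rat_ball q); split => //; exact: measurable_eball.
Qed.

End support.

Section riesz_potential.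
Context {R : realType}.
Variable sigma : {measure set (R * R) -> \bar R}.
Local Open Scope ereal_scope.

Lemma riesz1_ge0 (x y : R * R) : 0 <= riesz1 x y.
Proof.
rewrite /riesz1; case: ifP => _; first exact: leey.
by rewrite lee_fin invr_ge0 edist_ge0.
Qed.

Lemma integral_dyadic_term (x : R * R) (rho : R) k : (0 < rho)%R ->
  \int[sigma]_y dyadic_term x rho k y =
  (2 ^+ k.+1 / rho)%:E * sigma (eball x (rho / 2 ^+ k)).
Proof.
move=> r0; have mB := measurable_eball x (rho / 2 ^+ k).
rewrite (@integralZl_indic _ _ _ sigma setT measurableT (fun _ => eball x _)) //.
  by rewrite integral_indic // setIT.
by rewrite ltNge divr_ge0 ?exprn_ge0 // ltW.
Qed.

Lemma riesz_potential_le (alpha M rstar rho : R) (x : R * R) :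
  (1 < alpha)%R -> (0 <= M)%R -> (0 < rho)%R -> (rho <= rstar)%R ->
  upper_ahlfors_regular sigma alpha M rstar -> msupp sigma x ->
  \int[sigma]_y riesz1 x y <= (rho^-1)%:E * sigma setT +
    (2 * M * rho `^ alpha / rho / (1 - 2 `^ (1 - alpha)))%:E.
Proof.
move=> a1 M0 r0 rr UA sx; have t0 := dyadic_term_ge0 x rho r0.
apply: le_trans (ge0_le_integralT sigma _ _ (riesz1_ge0 x)
  (riesz1_le_dyadic x rho r0)) _.
have mt k : measurable_fun setT (dyadic_term x rho k).
  apply/measurable_EFinP; apply: measurable_funM => //.
  by apply: measurable_indic; exact: measurable_eball.
rewrite ge0_integralD //; first last.
- by apply: (ge0_emeasurable_sum (P := xpredT)) => // k y _ _; exact: t0.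
- by move=> y _; apply: nneseries_ge0 => *; exact: t0.
- by move=> y _; rewrite lee_fin invr_ge0 ltW.
rewrite integral_cst // leeD2l //.
apply: le_trans _ (dyadic_series_le alpha M rho a1 M0 r0).
rewrite integral_nneseries //.
apply: lee_nneseries => [k _ _|k _]; first by apply: integral_ge0 => y _; exact: t0.
rewrite integral_dyadic_term // (EFinM (2 ^+ k.+1 / rho) (M * _)).
apply: lee_wpmul2l; first by rewrite lee_fin divr_ge0 ?exprn_ge0 // ltW.
apply: UA => //; first by rewrite divr_gt0 // exprn_gt0.
apply: le_trans rr; rewrite ler_pdivrMr ?exprn_gt0 //.
by rewrite ler_peMr ?(ltW r0) // exprn_ege1 // ler1n.
Qed.

Lemma hmhalf_energy_le (alpha M rstar rho Phi : R) :
  (1 < alpha)%R -> (0 <= M)%R -> (0 < rho)%R -> (rho <= rstar)%R ->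
  upper_ahlfors_regular sigma alpha M rstar -> sigma setT = Phi%:E ->
  hmhalf_energy sigma <=
    ((Phi / rho + 2 * M * rho `^ alpha / rho / (1 - 2 `^ (1 - alpha))) * Phi)%:E.
Proof.
move=> a1 M0 r0 rr UA sT.
have Phi0 : (0 <= Phi)%R by rewrite -lee_fin -sT measure_ge0.
have q1 : (2 `^ (1 - alpha) < 1 :> R)%R by rewrite powR_lt1 ?ltr1n // subr_lt0.
rewrite (EFinM _ Phi) -sT; apply: ge0_integral_ae_le_cst.
- by rewrite addr_ge0 ?divr_ge0 ?mulr_ge0 ?powR_ge0 ?subr_ge0 ?(ltW r0) ?(ltW q1) //.
- by move=> x; apply: integral_ge0 => y _; exact: riesz1_ge0.
apply: filterS (msupp_ae sigma) => x sx.
apply: le_trans (riesz_potential_le alpha M rstar rho x a1 M0 r0 rr UA sx) _.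
by rewrite sT -EFinM -EFinD mulrC.
Qed.

End riesz_potential.

Theorem proposition4p7 :
  forall (R : realType) (alpha : R), 1 < alpha -> alpha <= 2 ->
  exists C : R, 0 < C /\
  forall (sigma : {finite_measure set (R * R)%type -> \bar R}) (M rstar Phi : R),
    0 < M -> 0 < rstar ->
    upper_ahlfors_regular sigma alpha M rstar ->
    sigma setT = Phi%:E ->
    Phi <= M * rstar `^ alpha ->
    (hmhalf_energy sigma <= (C * M `^ (alpha^-1) * Phi `^ (2 - alpha^-1))%:E)%E.
Proof.
move=> R alpha a1 _; set q := 2 `^ (1 - alpha) : R; set C := 1 + 2 / (1 - q).
have q1 : q < 1 by rewrite powR_lt1 ?ltr1n // subr_lt0.
have C_gt0 : 0 < C by rewrite ltr_wpDr // divr_ge0 // subr_ge0 ltW.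
exists C; split => // sigma M rstar Phi M0 r0 UA sT PhiM.
have bound rho := hmhalf_energy_le sigma alpha M rstar rho Phi a1 (ltW M0).
have : 0 <= Phi by rewrite -lee_fin -sT measure_ge0.
rewrite le_eqVlt => /predU1P[Phi0|Phi_gt0].
  apply: le_trans (bound rstar r0 (lexx _) UA sT) _.
  by rewrite -Phi0 mulr0 lee_fin !mulr_ge0 ?powR_ge0 // ltW.
(* This scale balances the two terms of [hmhalf_energy_le]. *)
set rho := (Phi / M) `^ alpha^-1.
have a0 : 0 < alpha by rewrite (lt_trans ltr01).
have rho_gt0 : 0 < rho by rewrite powR_gt0 // divr_gt0.
have rho_le : rho <= rstar.
  apply: ler_powRV; rewrite ?divr_ge0 ?(ltW Phi_gt0) ?(ltW M0) ?(ltW r0) //.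
  by rewrite ler_pdivrMr // mulrC.
apply: le_trans (bound rho rho_gt0 rho_le UA sT) _.
rewrite lee_fin -/q -powRrM mulVf ?gt_eqF // powRr1; last first.
  by apply: divr_ge0; exact: ltW.
rewrite le_eqVlt; apply/predU1l.
rewrite /C /rho powR_div ?(ltW Phi_gt0) ?(ltW M0) // powRB; last first.
  by apply/implyP => _; rewrite gt_eqF.
rewrite powR_mulrn ?(ltW Phi_gt0) //; field.
by rewrite !gt_eqF ?powR_gt0 // subr_gt0.
Qed.
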